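(* Let $\mathcal N_d$ be the set of nilpotent linear endomorphisms of $\mathbb K^d$, $K\subset\mathcal N_d$ compact, and $\|\cdot\|$ a norm on $\mathrm{End}(\mathbb K^d)$. Then there exists $C=C(K,\|\cdot\|)>0$ such that $\|\exp(tX)-\mathrm{id}\|\le C\,t\,\|\exp(X)-\mathrm{id}\|$ for all $t\in[0,1]$ and all $X\in K$.
   Context: $\mathbb K\in\{\mathbb R,\mathbb C\}$; $\exp$ is the matrix exponential. *)

From HB Require Import structures.
From mathcomp Require Import all_boot all_order all_algebra.
From mathcomp Require Import all_classical all_reals all_analysis.
From mathcomp Require Import complex.
Set Implicit Arguments. Unset Strict Implicit. Unset Printing Implicit Defensive.
Import Order.TTheory GRing.Theory Num.Theory.
Import numFieldNormedType.Exports.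
Local Open Scope classical_set_scope.
Local Open Scope ring_scope.

Definition nilpotent_mx (K : numFieldType) (d : nat) (X : 'M[K]_d) : Prop :=
  exists n : nat, X ^+ n = 0.

Definition nilpotent_set (K : numFieldType) (d : nat) : set 'M[K]_d :=
  [set X | nilpotent_mx X].

Definition mexp (K : numFieldType) (d : nat) (X : 'M[K]_d) : 'M[K]_d :=
  limn (fun n : nat => \sum_(k < n) ((k`!)%:R^-1 : K) *: X ^+ k).

(* An (arbitrary) norm on End(K^d) = 'M[K]_d, with values in the
   nonnegative (real) elements of K. *)
Definition is_norm (K : numFieldType) (d : nat) (N : 'M[K]_d -> K) : Prop :=
  [/\ (forall x, 0 <= N x),
      (forall x, N x = 0 -> x = 0),
      (forall (a : K) x, N (a *: x) = `|a| * N x) &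
      (forall x y, N (x + y) <= N x + N y)].

From Pilot Require Import Defs.
From HB Require Import structures.
From mathcomp Require Import all_boot all_order all_algebra.
From mathcomp Require Import all_classical all_reals all_analysis.
From mathcomp Require Import complex ring lra.
Set Implicit Arguments. Unset Strict Implicit. Unset Printing Implicit Defensive.
Import Order.TTheory GRing.Theory Num.Theory.
Import numFieldNormedType.Exports.
Local Open Scope classical_set_scope.
Local Open Scope ring_scope.

(* Let X be a nilpotent d x d matrix,
   d = n + 1; then X ^+ d = 0 and the exponential series is a finite sum.
   Writing phi(z) = (e^z - 1) / z,
     e^{tX} - 1 = t X phi(tX)   and   phi(X) = 1 + (nilpotent),
   so phi(X) is invertible by a finite geometric series and
     e^{tX} - 1 = t (e^X - 1) phi(X)^-1 phi(tX).
   The correction factor phi(X)^-1 phi(tX) is a polynomial expression in X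
   whose coefficients are bounded for t in [0, 1]; hence its entries are
   bounded uniformly on any entrywise bounded set of nilpotent matrices.
   It remains to compare the given norm N with the entries:
   - N A <= (max entry of A) * sum_ij N(E_ij) (triangle inequality);
   - a |A_ij| <= N A for some a > 0, by compactness of the unit sphere of R^m
     (complex matrices are first identified with real vectors);
   - a compact set is entrywise bounded (finite cover by balls). *)

(* A nilpotent square matrix of size n.+1 over a field vanishes at the power n.+1:
   its minimal polynomial divides 'X^m, hence is a power of 'X, and its
   degree is at most that of the characteristic polynomial. *)
Lemma nilpotent_mx_exp_size (F : fieldType) n (X : 'M[F]_n.+1) m :
  X ^+ m = 0 -> X ^+ n.+1 = 0.
Proof.
move=> Xm.
have : mxminpoly X %| ('X - 0%:P) ^+ m.
  by rewrite subr0; apply: mxminpoly_min; rewrite rmorphXn /= horner_mx_X.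
case/dvdp_exp_XsubCP => k _; rewrite subr0 => minpoly_eqp.
have minpolyE : mxminpoly X = 'X^k.
  by apply/eqP; rewrite -eqp_monic ?mxminpoly_monic ?monicXn.
have : (size (mxminpoly X) <= size (char_poly X))%N.
  apply: dvdp_leq; last exact: mxminpoly_dvd_char.
  by rewrite -lead_coef_eq0 (monicP (char_poly_monic X)) oner_neq0.
rewrite minpolyE size_polyXn size_char_poly ltnS => kn.
have := mx_root_minpoly X; rewrite minpolyE rmorphXn /= horner_mx_X => Xk.
by have := exprD X k (n.+1 - k); rewrite subnKC // Xk mul0r.
Qed.

Lemma unipotent_inverse {R : pzRingType} {W : R} {n : nat} :
  W ^+ n = 0 -> (1 + W) * \sum_(j < n) (- W) ^+ j = 1.
Proof.
move=> Wn; have := subrX1 (- W) n.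
by rewrite exprNn Wn mulr0 sub0r -opprD mulNr addrC => /oppr_inj <-.
Qed.

Lemma mexp_nilpotent (K : numFieldType) n (X : 'M[K]_n.+1) :
  X ^+ n.+1 = 0 -> mexp X = \sum_(k < n.+1) ((k`!)%:R^-1 : K) *: X ^+ k.
Proof.
move=> Xn; apply: lim_near_cst; first exact: norm_hausdorff.
near=> m.
have nm : (n.+1 <= m)%N by near: m; exact: nbhs_infty_ge.
rewrite -!(big_mkord xpredT (fun k => ((k`!)%:R^-1 : K) *: X ^+ k)).
rewrite (@big_cat_nat _ _ _ n.+1) //= [X in _ + X]big_nat_cond.
rewrite [X in _ + X]big1 ?addr0 // => k /andP[/andP[nk _] _].
by rewrite -(subnKC nk) exprD Xn mul0r scaler0.
Unshelve. all: by end_near.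
Qed.

Section PhiFunction.
Variables (K : numFieldType) (n : nat) (X : 'M[K]_n.+1).
Hypothesis Xnil : X ^+ n.+1 = 0.

(* phi_mx t = phi(t X), where phi(z) = (e^z - 1) / z = sum_k z^k / (k+1)!. *)
Definition phi_mx (t : K) : 'M[K]_n.+1 :=
  \sum_(k < n.+1) (t ^+ k / ((k.+1)`!)%:R) *: X ^+ k.

Lemma mexp_sub1_phi t : mexp (t *: X) - 1%:M = t *: (X * phi_mx t).
Proof.
rewrite mexp_nilpotent; last by rewrite exprZn Xnil scaler0.
rewrite big_ord_recl /= fact0 invr1 expr0 scale1r -scalemx1 scale1r.
rewrite [1 + _]addrC addrK.
rewrite /phi_mx mulr_sumr scaler_sumr big_ord_recr /=.
rewrite -scalerAr -exprS Xnil !scaler0 addr0.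
apply: eq_bigr => k _; rewrite /bump add1n exprZn scalerA -scalerAr scalerA.
by rewrite -exprS; congr (_ *: _); rewrite exprS; ring.
Qed.

(* phi(X) - 1 = X * Q for a polynomial Q in X, hence is nilpotent. *)
Lemma phi1_sub1_nilpotent : (phi_mx 1 - 1) ^+ n.+1 = 0.
Proof.
pose Q := \sum_(k < n) (((k.+2)`!)%:R^-1 : K) *: X ^+ k.
have phiE : phi_mx 1 - 1 = X * Q.
  rewrite /phi_mx big_ord_recl /= expr0 mul1r (_ : (1`!)%:R = 1) //.
  rewrite invr1 scale1r [1 + _]addrC addrK.
  rewrite mulr_sumr; apply: eq_bigr => k _.
  by rewrite /bump add1n expr1n mul1r -scalerAr -exprS.
have XQ : GRing.comm X Q.
  rewrite /GRing.comm mulr_sumr mulr_suml; apply: eq_bigr => k _.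
  by rewrite -scalerAr -scalerAl -exprS -exprSr.
by rewrite phiE exprMn_comm // Xnil mul0r.
Qed.

Definition phi1_inv : 'M[K]_n.+1 := \sum_(j < n.+1) (1 - phi_mx 1) ^+ j.

Lemma phi1_mul_inv : phi_mx 1 * phi1_inv = 1.
Proof.
have := unipotent_inverse phi1_sub1_nilpotent.
by rewrite addrC subrK opprB.
Qed.

Lemma mexp_sub1_factor t :
  mexp (t *: X) - 1%:M = t *: ((mexp X - 1%:M) * (phi1_inv * phi_mx t)).
Proof.
have := mexp_sub1_phi 1; rewrite !scale1r => ->.
by rewrite mexp_sub1_phi -mulrA (mulrA (phi_mx 1)) phi1_mul_inv mul1r.
Qed.

End PhiFunction.

Definition entry_bound {K : numDomainType} {m p} (A : 'M[K]_(m, p)) (b : K) :=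
  forall i j, `|A i j| <= b.

Section EntryBound.
Variables (K : numFieldType) (m : nat).
Implicit Types A B : 'M[K]_m.

Lemma entry_bound_le A a b : entry_bound A a -> a <= b -> entry_bound A b.
Proof. by move=> hA ab i j; apply: le_trans (hA i j) ab. Qed.

Lemma entry_bound1 : entry_bound (1%:M : 'M[K]_m) 1.
Proof. by move=> i j; rewrite mxE; case: (i == j); rewrite ?normr1 ?normr0. Qed.

Lemma entry_boundD A B a b :
  entry_bound A a -> entry_bound B b -> entry_bound (A + B) (a + b).
Proof. by move=> hA hB i j; rewrite mxE (le_trans (ler_normD _ _)) // lerD. Qed.

Lemma entry_boundN A a : entry_bound A a -> entry_bound (- A) a.
Proof. by move=> hA i j; rewrite mxE normrN. Qed.

Lemma entry_boundZ (c : K) A a : entry_bound A a -> entry_bound (c *: A) (`|c| * a).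
Proof. by move=> hA i j; rewrite mxE normrM ler_wpM2l. Qed.

Lemma entry_boundM A B a b :
  entry_bound A a -> entry_bound B b -> entry_bound (A * B) (m%:R * a * b).
Proof.
move=> hA hB i j; rewrite !mxE (le_trans (ler_norm_sum _ _ _)) //.
apply: (@le_trans _ _ (\sum_(k < m) a * b)).
  by apply: ler_sum => k _; rewrite normrM ler_pM.
by rewrite sumr_const card_ord -mulrA mulr_natl.
Qed.

Lemma entry_boundX A a k : entry_bound A a -> entry_bound (A ^+ k) ((m%:R * a) ^+ k).
Proof.
move=> hA; elim: k => [|k ih]; first by rewrite expr0; exact: entry_bound1.
by rewrite !exprS; apply: entry_boundM.
Qed.

Lemma entry_bound_sum p (F : 'I_p -> 'M[K]_m) (b : 'I_p -> K) :
  (forall k, entry_bound (F k) (b k)) ->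
  entry_bound (\sum_(k < p) F k) (\sum_(k < p) b k).
Proof.
move=> hF i j; rewrite summxE (le_trans (ler_norm_sum _ _ _)) //.
by apply: ler_sum => k _; apply: hF.
Qed.

End EntryBound.

Lemma phi_coef_le1 (K : numFieldType) (t : K) k : 0 <= t <= 1 ->
  `|t ^+ k / ((k.+1)`!)%:R| <= 1.
Proof.
case/andP=> t0 t1; have fact0 : 0 < ((k.+1)`!)%:R :> K by rewrite ltr0n fact_gt0.
rewrite ger0_norm; last by rewrite divr_ge0 ?exprn_ge0 ?(ltW fact0).
rewrite ler_pdivrMr // mul1r.
by rewrite (le_trans (exprn_ile1 _ t0 t1)) // ler1n fact_gt0.
Qed.

Lemma phi_mx_entry_bound (K : numFieldType) n (X : 'M[K]_n.+1) M t :
  entry_bound X M -> 0 <= M -> 0 <= t <= 1 ->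
  entry_bound (phi_mx X t) (\sum_(k < n.+1) (n.+1%:R * M) ^+ k).
Proof.
move=> hX M0 ht; apply: entry_bound_le.
  by apply: entry_bound_sum => k; apply/entry_boundZ/entry_boundX.
apply: ler_sum => k _; apply: ler_piMl; last exact: phi_coef_le1.
by rewrite exprn_ge0 // mulr_ge0.
Qed.

Lemma phi_correction_bound (K : numFieldType) n (M : K) : 0 <= M ->
  exists2 c : K, 0 <= c & forall (X : 'M[K]_n.+1) t,
    entry_bound X M -> 0 <= t <= 1 ->
    entry_bound (phi1_inv X * phi_mx X t) c.
Proof.
move=> M0; pose m : K := n.+1%:R.
pose s := \sum_(k < n.+1) (m * M) ^+ k.
pose T := \sum_(j < n.+1) (m * (s + 1)) ^+ j.
have m0 : 0 <= m by rewrite ler0n.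
have s0 : 0 <= s by rewrite sumr_ge0 // => k _; rewrite exprn_ge0 // mulr_ge0.
have T0 : 0 <= T.
  by rewrite sumr_ge0 // => k _; rewrite exprn_ge0 // mulr_ge0 // addr_ge0.
exists (m * T * s); first by rewrite !mulr_ge0.
move=> X t hX ht; apply: entry_boundM; last exact: phi_mx_entry_bound.
apply: entry_bound_sum => j; apply: entry_boundX; rewrite [s + 1]addrC.
apply: entry_boundD; first exact: entry_bound1.
by apply/entry_boundN/phi_mx_entry_bound; rewrite ?ler01 ?lexx.
Qed.

(* A norm on a K-module with values in K; Defs.is_norm is its instance for
   square matrices. *)
Definition vnorm {K : numDomainType} {V : lmodType K} (N : V -> K) : Prop :=
  [/\ (forall x, 0 <= N x),
      (forall x, N x = 0 -> x = 0),
      (forall (a : K) x, N (a *: x) = `|a| * N x) &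
      (forall x y, N (x + y) <= N x + N y)].

Section VNorm.
Context {K : numDomainType} {V : lmodType K} {N : V -> K}.
Hypothesis hN : vnorm N.

Lemma vnorm0 : N 0 = 0.
Proof. by case: hN => _ _ NZ _; rewrite -(scale0r (0 : V)) NZ normr0 mul0r. Qed.

Lemma vnorm_sum {I : Type} (r : seq I) (P : pred I) (F : I -> V) :
  N (\sum_(i <- r | P i) F i) <= \sum_(i <- r | P i) N (F i).
Proof.
case: hN => _ _ _ ND; elim/big_rec2: _ => [|i y x _ h]; first by rewrite vnorm0.
by apply: le_trans (ND _ _) _; rewrite lerD2l.
Qed.

End VNorm.

Lemma vnorm_le_entry_bound (K : numFieldType) m p (N : 'M[K]_(m, p) -> K) :
  vnorm N -> forall A b, entry_bound A b ->
  N A <= b * \sum_i \sum_j N (delta_mx i j).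
Proof.
move=> hN A b hA; rewrite {1}(matrix_sum_delta A).
apply: le_trans (vnorm_sum hN _ _ _) _; rewrite mulr_sumr; apply: ler_sum => i _.
apply: le_trans (vnorm_sum hN _ _ _) _; rewrite mulr_sumr; apply: ler_sum => j _.
by case: hN => N0 _ NZ _; rewrite NZ ler_wpM2r.
Qed.

(* Lower comparison: a N-dominates every entry. Proving it requires
   compactness and is done separately for real and complex scalars. *)
Definition entry_dominated {K : numDomainType} {m p} (N : 'M[K]_(m, p) -> K)
  (a : K) := forall (A : 'M[K]_(m, p)) i j, a * `|A i j| <= N A.

Lemma vnorm_mul_entry_bound (K : numFieldType) m (N : 'M[K]_m -> K) a c :
  vnorm N -> 0 < a -> entry_dominated N a -> 0 <= c ->
  exists2 C : K, 0 <= C &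
    forall Y Z, entry_bound Z c -> N (Y * Z) <= C * N Y.
Proof.
move=> hN a0 Ndom c0; pose B := \sum_i \sum_j N (delta_mx i j).
have B0 : 0 <= B.
  by case: hN => N0 _ _ _; apply: sumr_ge0 => i _; apply: sumr_ge0.
exists (m%:R * c * B / a); first by apply: divr_ge0 (ltW a0); rewrite !mulr_ge0 ?ler0n.
move=> Y Z hZ.
have hY : entry_bound Y (N Y / a) by move=> i j; rewrite ler_pdivlMr // mulrC.
apply: le_trans (vnorm_le_entry_bound hN (entry_boundM hY hZ)) _.
rewrite [leRHS](_ : _ = m%:R * (N Y / a) * c * B) //.
by field; rewrite gt_eqF.
Qed.

Lemma nilpotent_exp_estimate (K : numFieldType) n (S : set 'M[K]_n.+1)
    (N : 'M[K]_n.+1 -> K) (a M : K) :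
  vnorm N -> 0 < a -> entry_dominated N a -> 0 <= M ->
  (forall X, S X -> entry_bound X M /\ X ^+ n.+1 = 0) ->
  exists C : K, 0 < C /\
    forall (t : K), 0 <= t <= 1 -> forall X : 'M[K]_n.+1, S X ->
      N (mexp (t *: X) - 1%:M) <= C * t * N (mexp X - 1%:M).
Proof.
move=> hN a0 Ndom M0 hS.
have [c c0 hc] := phi_correction_bound n M0.
have [C C0 hC] := vnorm_mul_entry_bound hN a0 Ndom c0.
exists (C + 1); split; first by rewrite ltr_wpDl.
move=> t ht X SX; have [hX Xnil] := hS X SX; have t0 : 0 <= t by case/andP: ht.
rewrite (mexp_sub1_factor Xnil t); case: hN => N0 _ NZ _; rewrite NZ ger0_norm //.
apply: le_trans (ler_wpM2l t0 (hC _ _ (hc X t hX ht))) _.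
by rewrite mulrA [t * C]mulrC !ler_wpM2r // lerDl.
Qed.

(* A compact set of matrices is entrywise bounded, for any scalar field
   whose norm is archimedean: it is covered by finitely many balls. *)
Lemma compact_entry_bounded (K : numFieldType) m p (A : set 'M[K]_(m, p)) :
  (forall x : K, exists k : nat, `|x| < k%:R) -> compact A ->
  exists2 M : K, 0 <= M & forall X, A X -> entry_bound X M.
Proof.
move=> Karch; rewrite compact_cover => coverA.
have [|X _|D _ Dcover] := coverA nat setT (fun k => ball (0 : 'M[K]_(m, p)) k%:R).
- by move=> k _; exact: ball_open.
- have [k hk] := Karch `|X|; exists k => //.
  by rewrite -ball_normE /= sub0r normrN -(normr_id X).
exists (\sum_(k <- finmap.enum_fset D) k%:R).
  by apply: sumr_ge0 => k _; rewrite ler0n.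
move=> X /Dcover [k /= kD [_ Xball]] i j.
have := Xball i j; rewrite /ball /= mxE sub0r normrN => /ltW /le_trans; apply.
rewrite (bigD1_seq k) //= ?finmap.fset_uniq // lerDl.
by apply: sumr_ge0 => k' _; rewrite ler0n.
Qed.

Lemma entry_le_mx_norm (R : realType) m p (A : 'M[R]_(m, p)) i j : `|A i j| <= `|A|.
Proof. by rewrite [leRHS]/Num.Def.normr /= mx_normrE (le_bigmax _ _ (i, j)). Qed.

Lemma unit_sphere_compact (R : realType) n :
  compact [set v : 'rV[R]_n | `|v| = 1].
Proof.
apply: bounded_closed_compact.
  by exists 1; split => // M M1 v /= ->; exact: ltW.
apply: (@preimage_closed _ _ (fun v : 'rV[R]_n => `|v|) [set 1]).
  by move=> v _; exact: norm_continuous.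
exact: closed_eq.
Qed.

(* Every real norm on R^n dominates the coordinates: it is continuous, hence
   attains a positive minimum on the compact unit sphere of the sup norm. *)
Section RealNorm.
Variables (R : realType) (n : nat) (N : 'rV[R]_n -> R).
Hypothesis hN : vnorm N.

Let B := \sum_i \sum_j N (delta_mx i j).

(* N is bounded, hence Lipschitz and continuous, for the sup norm. *)
Lemma vnorm_le_sup_norm v : N v <= `|v| * B.
Proof. by apply: vnorm_le_entry_bound => // i j; exact: entry_le_mx_norm. Qed.

Lemma vnorm_continuous : continuous N.
Proof.
case: hN => N0 _ NZ ND.
have B0 : 0 <= B by apply: sumr_ge0 => i _; apply: sumr_ge0.
have NB v : N (- v) = N v by rewrite -scaleN1r NZ normrN normr1 mul1r.
have lipschitz v w : `|N v - N w| <= `|v - w| * B.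
  have hv : N v <= N (v - w) + N w by rewrite -{1}(subrK w v) ND.
  have hw : N w <= N (v - w) + N v.
    by rewrite -(NB (v - w)) opprB -{1}(subrK v w) ND.
  have := vnorm_le_sup_norm (v - w).
  by rewrite ler_norml => ?; apply/andP; split; lra.
move=> v; apply/(cvgrPdist_lt (FF := nbhs_filter v)) => e e0.
have eB : 0 < e / (B + 1) by rewrite divr_gt0 // ltr_wpDl.
apply/(@nbhs_normP _ [the normedModType R of 'rV[R]_n]).
exists (e / (B + 1)) => //= w; rewrite /ball_ /= ltr_pdivlMr ?ltr_wpDl // => vw.
apply: le_lt_trans (lipschitz v w) (le_lt_trans _ vw).
by rewrite ler_wpM2l // lerDl.
Qed.

Lemma vnorm_entry_dominated : exists2 a : R, 0 < a & entry_dominated N a.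
Proof.
case: hN => N0 Ndef NZ _; pose S := [set v : 'rV[R]_n | `|v| = 1].
have normalize v : v != 0 -> S (`|v|^-1 *: v).
  by move=> v0; rewrite /S /= normrZ ger0_norm ?invr_ge0 // mulVf ?normr_eq0.
have zero_ok (a : R) (v : 'rV[R]_n) i j : v = 0 -> a * `|v i j| <= N v.
  by move=> ->; rewrite mxE normr0 mulr0 N0.
have [[w Sw]|Sempty] := pselect (S !=set0); last first.
  exists 1 => // v i j; have [v0|v0] := eqVneq v 0; first exact: zero_ok.
  by exfalso; apply: Sempty; exists (`|v|^-1 *: v); exact: normalize.
have [c Sc cmin] := compact_EVT_min (ex_intro _ w Sw) (@unit_sphere_compact R n)
  (continuous_subspaceT vnorm_continuous).
rewrite inE in Sc.
have c_gt0 : 0 < N c.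
  rewrite lt_def N0 andbT; apply/eqP => /Ndef c0.
  by move: Sc; rewrite /S /= c0 normr0 => /esym/eqP; rewrite oner_eq0.
exists (N c) => // v i j; have [v0|v0] := eqVneq v 0; first exact: zero_ok.
have := cmin _ (mem_set (normalize v v0)).
rewrite NZ ger0_norm ?invr_ge0 // ler_pdivlMl ?normr_gt0 // => hv.
apply: le_trans hv; rewrite mulrC.
by apply: ler_wpM2r; [exact: ltW | exact: entry_le_mx_norm].
Qed.

End RealNorm.

Lemma real_mx_entry_dominated (R : realType) d (N : 'M[R]_d -> R) :
  vnorm N -> exists2 a : R, 0 < a & entry_dominated N a.
Proof.
case=> N0 Ndef NZ ND.
have hNvec : vnorm (fun v : 'rV[R]_(d * d) => N (vec_mx v)).
  split=> // [v /Ndef v0|a v|v w]; last by rewrite linearD ND.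
    by rewrite -(vec_mxK v) v0 linear0.
  by rewrite linearZ NZ.
have [a a0 Ndom] := vnorm_entry_dominated hNvec.
exists a => // A i j.
by have := Ndom (mxvec A) ord0 (mxvec_index i j); rewrite mxvecE mxvecK.
Qed.

(* The modulus of a complex number is at most |Re| + |Im|. *)
Lemma sqrt_sum_sqr_le (R : realType) (x y : R) :
  Num.sqrt (x ^+ 2 + y ^+ 2) <= `|x| + `|y|.
Proof.
rewrite -[leRHS]ger0_norm ?addr_ge0 // -sqrtr_sqr ler_sqrt ?sqr_ge0 //.
have := real_normK (num_real x); have := real_normK (num_real y).
have := normr_ge0 x; have := normr_ge0 y; nra.
Qed.

(* Complex matrices are identified R-linearly with R^(2 d^2) by splitting
   every entry into its real and imaginary parts. *)
Section Realification.
Variables (R : realType) (d : nat).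
Local Notation C := (R[i])%C.
Local Notation D := (d * d + d * d)%N.

Definition complexify (v : 'rV[R]_D) : 'M[C]_d :=
  \matrix_(i, j) Complex (v ord0 (lshift (d * d) (mxvec_index i j)))
                         (v ord0 (rshift (d * d) (mxvec_index i j))).

Definition realify (A : 'M[C]_d) : 'rV[R]_D :=
  row_mx (mxvec (map_mx (@complex.Re R) A)) (mxvec (map_mx (@complex.Im R) A)).

Lemma realifyK : cancel realify complexify.
Proof.
move=> A; apply/matrixP => i j; rewrite mxE /realify row_mxEl row_mxEr.
by rewrite !mxvecE !mxE; case: (A i j).
Qed.

Lemma complexifyK : cancel complexify realify.
Proof.
move=> v; apply/rowP => k; rewrite -[k]splitK; case: (fintype.split k) => [k1|k2] /=.
  by rewrite row_mxEl; case/mxvec_indexP: k1 => i j; rewrite mxvecE !mxE.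
by rewrite row_mxEr; case/mxvec_indexP: k2 => i j; rewrite mxvecE !mxE.
Qed.

Lemma complexifyD v w : complexify (v + w) = complexify v + complexify w.
Proof. by apply/matrixP => i j; rewrite !mxE. Qed.

Lemma complexifyZ (a : R) v : complexify (a *: v) = a%:C%C *: complexify v.
Proof.
apply/matrixP => i j; rewrite !mxE /=.
by apply/eqP; rewrite eq_complex /=; apply/andP; split; apply/eqP; ring.
Qed.

Lemma realify_Re (A : 'M[C]_d) i j :
  realify A ord0 (lshift (d * d) (mxvec_index i j)) = complex.Re (A i j).
Proof. by rewrite /realify row_mxEl mxvecE mxE. Qed.

Lemma realify_Im (A : 'M[C]_d) i j :
  realify A ord0 (rshift (d * d) (mxvec_index i j)) = complex.Im (A i j).
Proof. by rewrite /realify row_mxEr mxvecE mxE. Qed.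

(* A complex-valued norm takes real values, so its real part is a real norm on
   R^(2 d^2); domination of real and imaginary parts gives domination of the
   complex entries. *)
Lemma complex_mx_entry_dominated (N : 'M[C]_d -> C) :
  vnorm N -> exists2 a : C, 0 < a & entry_dominated N a.
Proof.
case=> N0 Ndef NZ ND.
have N_real A : N A = (complex.Re (N A))%:C%C.
  by have := ger0_Im (N0 A); case: (N A) => x y /= ->.
pose Nr v := complex.Re (N (complexify v)).
have Nr_ge0 v : 0 <= Nr v by have := N0 (complexify v); rewrite lecE => /andP[].
have hNr : vnorm Nr.
  have complexify0 : complexify 0 = 0.
    by rewrite -(scale0r (0 : 'rV[R]_D)) complexifyZ scale0r.
  split=> // [v Nv0|a v|v w].
  - have : complexify v = 0.
      by apply: Ndef; rewrite N_real; move: Nv0; rewrite /Nr => ->.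
    by rewrite -{2}(complexifyK v) => ->; rewrite -complexify0 complexifyK.
  - rewrite /Nr complexifyZ NZ normc_def /= expr0n /= addr0 sqrtr_sqr.
    by case: (N (complexify v)) => p q /=; rewrite mul0r subr0.
  - have := ND (complexify v) (complexify w); rewrite /Nr complexifyD lecE.
    by case/andP=> _; case: (N (complexify v)) => ? ?; case: (N (complexify w)).
have [a a0 Ndom] := vnorm_entry_dominated hNr.
exists (a / 2)%:C%C => [|A i j]; first by rewrite ltcR divr_gt0.
have hRe := Ndom (realify A) ord0 (lshift (d * d) (mxvec_index i j)).
have hIm := Ndom (realify A) ord0 (rshift (d * d) (mxvec_index i j)).
rewrite /Nr realifyK realify_Re in hRe; rewrite /Nr realifyK realify_Im in hIm.
rewrite [N A]N_real normc_def -rmorphM lecR.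
apply: le_trans (_ : a / 2 * (`|complex.Re (A i j)| + `|complex.Im (A i j)|) <= _).
  by rewrite ler_wpM2l ?sqrt_sum_sqr_le // divr_ge0 // ltW.
lra.
Qed.

End Realification.

Lemma real_archimedean (R : realType) (x : R) : exists k : nat, `|x| < k%:R.
Proof. by exists (Num.truncn `|x|).+1; rewrite truncnS_gt. Qed.

Lemma complex_archimedean (R : realType) (x : (R[i])%C) : exists k : nat, `|x| < k%:R.
Proof.
exists (Num.truncn (Num.sqrt (complex.Re x ^+ 2 + complex.Im x ^+ 2))).+1.
by rewrite normc_def -(rmorph_nat (@real_complex_def R (Phant R))) ltcR truncnS_gt.
Qed.

Theorem mainTheorem11 (R : realType) (K : numFieldType)
  (hK : K = (R : numFieldType) \/ K = ((R[i])%C : numFieldType))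
  (d : nat) (Kset : set 'M[K]_d) (N : 'M[K]_d -> K) :
  is_norm N ->
  Kset `<=` @nilpotent_set K d ->
  compact Kset ->
  exists C : K, 0 < C /\
    forall (t : K), 0 <= t <= 1 ->
    forall X : 'M[K]_d, Kset X ->
      N (mexp (t *: X) - 1%:M) <= C * t * N (mexp X - 1%:M).
Proof.
move=> hN Knil Kcompact.
case: d Kset N hN Knil Kcompact => [|n] Kset N hN Knil Kcompact.
  exists 1; split => // t _ X _.
  rewrite (flatmx0 (mexp (t *: X) - 1%:M)) (flatmx0 (mexp X - 1%:M)).
  by rewrite vnorm0 // mulr0.
have Karch : forall x : K, exists k : nat, `|x| < k%:R.
  by case: hK => ->; [exact: real_archimedean | exact: complex_archimedean].
have [a a0 Ndom] : exists2 a : K, 0 < a & entry_dominated N a.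
  case: hK hN => hK; subst K.
  - exact: real_mx_entry_dominated.
  - exact: complex_mx_entry_dominated.
have [M M0 Kbound] := compact_entry_bounded Karch Kcompact.
apply: (nilpotent_exp_estimate hN a0 Ndom M0) => X KX; split; first exact: Kbound.
by have [m Xm] := Knil X KX; exact: nilpotent_mx_exp_size Xm.
Qed.
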